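(* Let $\Omega\subset\mathbb{R}^n$ be a bounded convex domain with smooth boundary and let $u$ be a given external potential on $\Omega$. Let $U_1$ and $U_2$ be two solutions of $$-\Delta U(x)=\frac{e^{-(U(x)+u(x))}}{\int_\Omega e^{-(U(y)+u(y))}\,dy}\quad\text{in }\Omega,\qquad U=0\ \text{on }\partial\Omega,$$ and set $I_i:=\int_\Omega \exp(-u-U_i)\,dx$ for $i=1,2$. If $I_1\ge I_2$, then $U_1(x)\le U_2(x)$ for all $x\in\Omega$. In particular, if $I_1=I_2$, then $U_1(x)=U_2(x)$ for all $x\in\Omega$. *)

From HB Require Import structures.
From mathcomp Require Import all_boot all_order all_algebra.
From mathcomp Require Import all_classical all_reals all_analysis.
Set Implicit Arguments. Unset Strict Implicit. Unset Printing Implicit Defensive.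
Import Order.TTheory GRing.Theory Num.Theory.
Import numFieldNormedType.Exports.
Local Open Scope classical_set_scope.
Local Open Scope ring_scope.

(* R^n is modelled by row vectors 'rV[R]_n; e_i is the i-th standard basis vector. *)
Definition ebasis {R : realType} {n : nat} (i : 'I_n) : 'rV[R]_n := delta_mx 0 i.

Definition partial {R : realType} {n : nat} (i : 'I_n) (f : 'rV[R]_n -> R) :
  'rV[R]_n -> R := 'D_(ebasis i) f.

Definition laplacian {R : realType} {n : nat} (f : 'rV[R]_n -> R) (x : 'rV[R]_n) : R :=
  \sum_(i < n) partial i (partial i f) x.

Definition C2_on {R : realType} {n : nat} (D : set 'rV[R]_n) (f : 'rV[R]_n -> R) :=
  [/\ forall x, D x -> differentiable f x,
      forall i x, D x -> differentiable (partial i f) x &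
      forall i j, {within D, continuous (partial j (partial i f))}].

Fixpoint Ck {R : realType} {n : nat} (k : nat) (f : 'rV[R]_n -> R) : Prop :=
  match k with
  | 0 => continuous f
  | k'.+1 => (forall x, differentiable f x) /\ forall i, Ck k' (partial i f)
  end.
Definition smooth {R : realType} {n : nat} (f : 'rV[R]_n -> R) := forall k, Ck k f.

Definition smooth_boundary {R : realType} {n : nat} (Omega : set 'rV[R]_n) :=
  forall p, (closure Omega `\` Omega) p ->
    exists (r : R) (phi : 'rV[R]_n -> R),
      [/\ 0 < r, smooth phi,
          (forall x, ball p r x -> (Omega x <-> (phi x < 0))) &
          exists i, partial i phi p != 0].

Definition bounded_convex_smooth_domain {R : realType} {n : nat}
    (Omega : set 'rV[R]_n) :=
  [/\ open Omega /\ Omega !=set0, connected Omega, bounded_set Omega,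
      convex_set (Omega : set (convex_lmodType 'rV[R]_n)) & smooth_boundary Omega].

Definition vcons {R : realType} {n : nat} (t : R) (v : 'rV[R]_n) : 'rV[R]_n.+1 :=
  \row_(j < n.+1) match unlift ord0 j with Some k => v 0 k | None => t end.

(* n-dimensional Lebesgue integral of a function with values in \bar R,
   computed as the iterated one-dimensional Lebesgue integral (by Tonelli this
   is the integral w.r.t. n-dimensional Lebesgue measure for nonnegative
   measurable integrands, the only case used below). *)
Fixpoint lebesgue_int_n {R : realType} (n : nat) : ('rV[R]_n -> \bar R) -> \bar R :=
  match n with
  | 0 => fun f => f 0
  | n'.+1 => fun f =>
      (\int[@lebesgue_measure R]_(t in [set: R])
          lebesgue_int_n (fun v : 'rV[R]_n' => f (vcons t v)))%E
  end.

Definition Ipot {R : realType} {n : nat} (Omega : set 'rV[R]_n)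
    (u U : 'rV[R]_n -> R) : \bar R :=
  lebesgue_int_n (fun x => if `[< Omega x >] then (expR (- (U x + u x)))%:E else 0%E).

Definition is_solution {R : realType} {n : nat} (Omega : set 'rV[R]_n)
    (u U : 'rV[R]_n -> R) :=
  [/\ C2_on Omega U,
      {within closure Omega, continuous U},
      (forall x, (closure Omega `\` Omega) x -> U x = 0),
      (0 < Ipot Omega u U < +oo)%E &
      forall x, Omega x ->
        - laplacian U x = expR (- (U x + u x)) / fine (Ipot Omega u U)].

From HB Require Import structures.
From mathcomp Require Import all_boot all_order all_algebra.
From mathcomp Require Import all_classical all_reals all_analysis.
Import Order.TTheory GRing.Theory Num.Theory.
Import numFieldNormedType.Exports.
Local Open Scope classical_set_scope.
Local Open Scope ring_scope.

(* Maximum principle.  Let c maximise U1 - U2 on the closure of Omega and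
   suppose U1 c > U2 c.  As both functions vanish on the boundary, c lies in
   Omega, where every pure second derivative of U1 - U2 is nonpositive, so
   -Delta U1 c >= -Delta U2 c.  But the right-hand side exp(-(U + u)) / I is
   strictly decreasing in U and nonincreasing in I, so U1 c > U2 c and I1 >= I2
   give -Delta U1 c < -Delta U2 c.  Hence U1 <= U2, and equality of the
   integrals lets us swap the roles of U1 and U2. *)

Section derivative_along_line.
Variables (R : numFieldType) (V W : normedModType R).

Lemma difference_quotient_along_line (f : V -> W) (x v : V) (t : R) :
  (fun h : R =>
     h^-1 *: (((fun s => f (s *: v + x)) \o shift t) (h *: 1) - f (t *: v + x)))
  = (fun h : R =>
     h^-1 *: ((f \o shift (t *: v + x)) (h *: v) - f (t *: v + x))).
Proof.
by apply/funext => h /=; rewrite [h *: 1]mulr1 scalerDl addrA.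
Qed.

Lemma derive1_along_line (f : V -> W) (x v : V) (t : R) :
  'D_1 (fun s : R => f (s *: v + x)) t = 'D_v f (t *: v + x).
Proof. by rewrite /derive difference_quotient_along_line. Qed.

Lemma derivable1_along_line (f : V -> W) (x v : V) (t : R) :
  derivable (fun s : R => f (s *: v + x)) t 1 = derivable f (t *: v + x) v.
Proof. by rewrite /derivable difference_quotient_along_line. Qed.

End derivative_along_line.

Section second_derivative_at_max.
Variable R : realType.

Lemma derive2_le0_at_local_max (g : R -> R) (x : R) :
  (\forall t \near x, g t <= g x) -> (\forall t \near x, derivable g t 1) ->
  derivable ('D_1 g) x 1 -> 'D_1 ('D_1 g) x <= 0.
Proof.
move=> gmax gder dg'; rewrite leNgt; apply/negP => g''x_gt0.
have [d /= d0 near_x] := iffLR (nbhs_ballP _ _) (filterI gmax gder).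
have {}near_x t : t \in `]x - d, x + d[ -> g t <= g x /\ derivable g t 1.
  by move=> tx; apply: near_x; rewrite ball_itv.
(* By Fermat g' x = 0, so g'' x > 0 makes g' positive just right of x,
   and the mean value theorem lets g exceed g x there. *)
have g'x0 : 'D_1 g x = 0.
  apply: (@derive_val _ _ _ _ _ _ _
    (@derive1_at_max _ g (x - d) (x + d) x _ _ _ _)).
  - by rewrite lerD2l -subr_ge0 opprK addr_ge0 ?ltW.
  - by move=> t /near_x[].
  - by rewrite in_itv /= ltrDl d0 gtrDl oppr_lt0 d0.
  - by move=> t /near_x[].
have [e /= e0 g'_pos] := iffLR (nbhs_ballP _ _) (cvgr_gt _ dg' _ g''x_gt0).
set t := Num.min d e / 2.
have t_gt0 : 0 < t by rewrite divr_gt0 // lt_min d0 e0.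
have /andP[td te] : (t < d) && (t < e).
  by rewrite -lt_min /t ltr_pdivrMr // ltr_pMr ?ltr1n // lt_min d0 e0.
have sub_near s : s \in `[x, x + t] -> s \in `]x - d, x + d[.
  rewrite !in_itv /= => /andP[xs sxt]; rewrite (le_lt_trans sxt) ?ltrD2l //.
  by rewrite andbT (lt_le_trans _ xs) // gtrDl oppr_lt0.
have g'_pos_right s : s \in `]x, x + t[ -> 0 < 'D_1 g s.
  rewrite in_itv /= => /andP[xs sxt].
  have := g'_pos (s - x); rewrite /= g'x0 subr0 [_%:A]mulr1 subrK.
  rewrite pmulr_rgt0 ?invr_gt0 ?subr_gt0 //.
  apply; last by rewrite subr_eq0 gt_eqF.
  rewrite /ball /= sub0r normrN gtr0_norm ?subr_gt0 // ltrBlDl.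
  by rewrite (lt_trans sxt) ?ltrD2l.
have gx_deriv s : s \in `[x, x + t] -> derivable g s 1.
  by move=> /sub_near/near_x[].
have xt : x < x + t by rewrite ltrDl.
have [s sx] := MVT xt
  (fun s sx => derivableP (gx_deriv s (subset_itv_oo_cc sx)))
  (derivable_within_continuous gx_deriv).
have /sub_near/near_x[+ _] : x + t \in `[x, x + t].
  by rewrite in_itv /= lexx andbT lerDl ltW.
rewrite -subr_le0 => /[swap] ->; rewrite addrAC subrr add0r.
by rewrite leNgt mulr_gt0 // g'_pos_right.
Qed.

Variable V : normedModType R.

Lemma derive_dir2_le0_at_local_max (F : V -> R) (x v : V) :
  (\forall y \near x, F y <= F x) -> (\forall y \near x, derivable F y v) ->
  derivable ('D_v F) x v -> 'D_v ('D_v F) x <= 0.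
Proof.
move=> Fmax Fder dF'.
pose line s : V := s *: v + x.
have line0 : line 0 = x by rewrite /line scale0r add0r.
have near_line (P : V -> Prop) :
    (\forall y \near x, P y) -> \forall s \near 0, P (line s).
  have line_cvg : line s @[s --> 0] --> x.
    rewrite -[X in _ --> X]line0; apply: cvgD; last exact: cvg_cst.
    by apply: cvgZ; [exact: cvg_id | exact: cvg_cst].
  exact: line_cvg.
pose g s := F (line s).
have Dg : 'D_1 g = 'D_v F \o line by apply/funext => s; exact: derive1_along_line.
have D2g : 'D_1 ('D_1 g) 0 = 'D_v ('D_v F) x.
  by rewrite Dg -line0; exact: derive1_along_line.
rewrite -D2g; apply: derive2_le0_at_local_max.
- by rewrite /g line0; exact: (near_line (fun y => F y <= F x)).
- apply: filterS (near_line _ Fder) => s.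
  by rewrite /g /line derivable1_along_line.
- by rewrite Dg /line derivable1_along_line scale0r add0r.
Qed.

End second_derivative_at_max.

Section laplacian.
Variables (R : realType) (n : nat).
Implicit Types (f g : 'rV[R]_n -> R) (x : 'rV[R]_n).

Lemma near_partialB f g x i :
  (\forall y \near x, differentiable f y /\ differentiable g y) ->
  \forall y \near x, partial i (f - g) y = (partial i f - partial i g) y.
Proof.
apply: filterS => y [df dg].
by rewrite /partial deriveB //; exact: diff_derivable.
Qed.

Lemma laplacianB f g x :
  (\forall y \near x, differentiable f y /\ differentiable g y) ->
  (forall i, differentiable (partial i f) x /\ differentiable (partial i g) x) ->
  laplacian (f - g) x = laplacian f x - laplacian g x.
Proof.
move=> dfg d2fg; rewrite /laplacian -sumrB; apply: eq_bigr => i _.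
have [d2f d2g] := d2fg i.
rewrite {1}/partial (near_eq_derive _ (near_partialB _ _ _ i dfg)).
by rewrite deriveB //; exact: diff_derivable.
Qed.

Lemma laplacian_le0_at_local_max f x :
  (\forall y \near x, f y <= f x) -> (\forall y \near x, differentiable f y) ->
  (forall i, derivable (partial i f) x (ebasis i)) -> laplacian f x <= 0.
Proof.
move=> fmax df d2f; apply: sumr_le0 => i _.
apply: derive_dir2_le0_at_local_max; [exact: fmax | | exact: d2f].
by apply: filterS df => y; exact: diff_derivable.
Qed.

Lemma laplacian_le_at_local_max_sub f g x :
  (\forall y \near x, f y - g y <= f x - g x) ->
  (\forall y \near x, differentiable f y /\ differentiable g y) ->
  (forall i, differentiable (partial i f) x /\ differentiable (partial i g) x) ->
  laplacian f x <= laplacian g x.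
Proof.
move=> fgmax dfg d2fg; rewrite -subr_le0 -laplacianB //.
apply: laplacian_le0_at_local_max => //.
  by apply: filterS dfg => y [df dg]; exact: differentiableB.
move=> i; have [d2f d2g] := d2fg i.
apply: (near_eq_derivable (f := partial i f - partial i g)).
  by apply: filterS (near_partialB _ _ _ i dfg) => y ->.
by apply: derivableB; exact: diff_derivable.
Qed.

End laplacian.

Lemma bounded_set_closure (R : realFieldType) (V : normedModType R) (A : set V) :
  bounded_set A -> bounded_set (closure A).
Proof.
move=> [M [Mreal AM]]; exists (Num.max M 0); split; first by rewrite num_real.
move=> M' MM' x Ax.
have M'_gt0 : 0 < M' by apply: le_lt_trans MM'; rewrite le_max lexx orbT.
have M_lt_M' : M < M' by apply: le_lt_trans MM'; rewrite le_max lexx.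
have M_lt : M < (M + M') / 2 by rewrite midf_lt.
have A_ball : A `<=` ball (0 : V) M'.
  move=> y Ay; rewrite -ball_normE /= sub0r normrN.
  by apply: le_lt_trans (AM _ M_lt y Ay) _; rewrite midf_lt.
have := closureS A_ball Ax; rewrite -/(closed_ball _ _) closed_ballE //=.
by rewrite /closed_ball_ /= distrC subr0.
Qed.

Lemma ltr_expRN_div {R : realType} (c a b I J : R) :
  b < a -> 0 < J -> J <= I -> expR (- (a + c)) / I < expR (- (b + c)) / J.
Proof.
move=> ba J0 JI; have I0 := lt_le_trans J0 JI.
apply: (@lt_le_trans _ _ (expR (- (b + c)) / I)).
  by rewrite ltr_pM2r ?invr_gt0 // ltr_expR ltrN2 ltrD2r.
by rewrite ler_pM2l ?expR_gt0 // lef_pV2.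
Qed.

Lemma solution_comparison {R : realType} {n : nat} {Omega : set 'rV[R]_n}
    {u U1 U2 : 'rV[R]_n -> R} :
  open Omega -> bounded_set Omega ->
  is_solution Omega u U1 -> is_solution Omega u U2 ->
  (Ipot Omega u U2 <= Ipot Omega u U1)%E ->
  forall x, Omega x -> U1 x <= U2 x.
Proof.
move=> oO bO [C1 c1 b1 I1 e1] [C2 c2 b2 I2 e2] I21 x Ox.
rewrite leNgt; apply/negP => U21x.
have [c /set_mem Kc cmax] : exists2 c, c \in closure Omega &
    forall y, y \in closure Omega -> (U1 - U2) y <= (U1 - U2) c.
  apply: EVT_max_rV; first by exists x; exact: subset_closure.
    apply: bounded_closed_compact; last exact: closed_closure.
    exact: bounded_set_closure.
  by move=> z; apply: cvgB; [exact: c1 | exact: c2].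
have U21c : U2 c < U1 c.
  rewrite -subr_gt0; apply: lt_le_trans (cmax x (mem_set (subset_closure Ox))).
  by rewrite subr_gt0.
have Oc : Omega c.
  by apply: contrapT => nOc; move: U21c; rewrite b1 // b2 // ltxx.
have near_c : \forall y \near c, Omega y by exact: oO.
have lap : laplacian U1 c <= laplacian U2 c.
  case: C1 C2 => [D1 P1 _] [D2 P2 _].
  apply: laplacian_le_at_local_max_sub.
  - apply: filterS near_c => y Oy.
    exact: (cmax y (mem_set (subset_closure Oy))).
  - by apply: filterS near_c => y Oy; split; [exact: D1 | exact: D2].
  - by move=> i; split; [exact: P1 | exact: P2].
have fin_I (I : \bar R) : (0 < I < +oo)%E -> I \is a fin_num.
  by case/andP => I0 Ioo; rewrite gt0_fin_numE.
have I21_fine := fine_le (fin_I _ I2) (fin_I _ I1) I21.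
have := ltr_expRN_div (u c) _ _ _ _ U21c (fine_gt0 I2) I21_fine.
by rewrite -e1 // -e2 // ltrN2 ltNge lap.
Qed.

Theorem mainTheorem2 (R : realType) (n : nat) (Omega : set 'rV[R]_n)
    (u U1 U2 : 'rV[R]_n -> R) :
  bounded_convex_smooth_domain Omega ->
  is_solution Omega u U1 -> is_solution Omega u U2 ->
  (Ipot Omega u U2 <= Ipot Omega u U1)%E ->
  (forall x, Omega x -> U1 x <= U2 x) /\
  (Ipot Omega u U1 = Ipot Omega u U2 -> forall x, Omega x -> U1 x = U2 x).
Proof.
move=> [[oO _] _ bO _ _] s1 s2 I21.
have U12 := solution_comparison oO bO s1 s2 I21.
split=> // I12 x Ox; apply: le_anti; rewrite U12 //=.
by apply: (solution_comparison oO bO s2 s1) => //; rewrite I12.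
Qed.
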